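(* For all integers $b,k\ge0$ and $i\in\{1,2,\dots,b-1\}$, $$\sum_{a=0}^{k}\frac{[a+i-1]!\,[b-i+a-1]!}{[a]!\,[a+b]!}=\frac{1}{[i]\,[b-i]}\cdot\frac{[i+k]!\,[b+k-i]!}{[k]!\,[b+k]!},$$ as an identity of rational functions of $q$.
   Context: For an indeterminate (or complex number) $q$ and $m\in\mathbb{Z}$, $[m]=\frac{q^m-q^{-m}}{q-q^{-1}}$ is the quantum integer and $[m]!=[1][2]\cdots[m]$, $[0]!=1$. *)

From mathcomp Require Import all_boot all_order all_algebra.
Set Implicit Arguments. Unset Strict Implicit. Unset Printing Implicit Defensive.
Import Order.TTheory GRing.Theory Num.Theory.
Local Open Scope ring_scope.

Definition RatFun : fieldType := {fraction {poly rat}}.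

Definition qvar : RatFun := tofrac ('X : {poly rat}).

Definition qint (F : fieldType) (q : F) (m : int) : F :=
  (q ^ m - q ^ (- m)) / (q - q^-1).

Definition qfact (F : fieldType) (q : F) (n : nat) : F :=
  \prod_(1 <= j < n.+1) qint q j%:Z.

From mathcomp Require Import all_boot all_order all_algebra.
From mathcomp Require Import ring zify.
Import Order.TTheory GRing.Theory Num.Theory.
Local Open Scope ring_scope.

(* Writing i = m + 1 and b - i = n + 1, induct on k: the right-hand side
   R_k telescopes, since R_(k+1) - R_k is the (k+1)-st summand by the
   quantum-integer identity [m+k+2][n+k+2] = [k+1][m+n+k+3] + [m+1][n+1].
   This holds in any field at any q that is not a root of unity, which
   keeps all quantum integers [j], j > 0, invertible. *)

Section QInt.
Variables (F : fieldType) (q : F).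
Hypothesis q_neq0 : q != 0.

Lemma qint_addMaddE (x y k : int) :
  qint q (x + k) * qint q (y + k)
  = qint q k * qint q (x + y + k) + qint q x * qint q y.
Proof.
have [d0 | d_neq0] := eqVneq (q - q^-1) 0.
  (* q = q^-1: every [m] is 0, because division by 0 returns 0. *)
  by rewrite /qint d0 !invr0 !mulr0 addr0.
rewrite /qint !opprD !expfzDr // -!invr_expz.
have := expfz_neq0 x q_neq0; have := expfz_neq0 y q_neq0.
have := expfz_neq0 k q_neq0.
move: (q ^ x) (q ^ y) (q ^ k) => X Y K K0 Y0 X0.
have qq_neq1 : q * q - 1 != 0 by rewrite -(mulfV q_neq0) -mulrBr mulf_neq0.
by field; rewrite q_neq0 qq_neq1 X0 Y0 K0.
Qed.

Lemma qfact0 : qfact q 0 = 1.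
Proof. by rewrite /qfact big_geq. Qed.

Lemma qfactS n : qfact q n.+1 = qfact q n * qint q n.+1%:Z.
Proof. by rewrite /qfact big_nat_recr. Qed.

Hypothesis q_not_root1 : forall n, (0 < n)%N -> q ^+ n != 1.

Lemma qint_neq0 n : (0 < n)%N -> qint q n%:Z != 0.
Proof.
move=> n_gt0; have qn_neq0 : q ^+ n != 0 by rewrite expf_neq0.
have q2n_neq1 : q ^+ (n + n) != 1 by rewrite q_not_root1 // addn_gt0 n_gt0.
have q2_neq1 : q ^+ 2 != 1 by rewrite q_not_root1.
rewrite /qint -!invr_expz -exprnP mulf_neq0 ?invr_eq0 // subr_eq0.
- by apply: contra q2n_neq1 => /eqP qnE; rewrite exprD {2}qnE mulfV.
- by apply: contra q2_neq1 => /eqP qE; rewrite expr2 {2}qE mulfV.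
Qed.

Lemma qfact_neq0 n : qfact q n != 0.
Proof.
elim: n => [|n IHn]; first by rewrite qfact0 oner_eq0.
by rewrite qfactS mulf_neq0 // qint_neq0.
Qed.

Lemma sum_qfact_ratio (m n k : nat) :
  \sum_(0 <= a < k.+1)
     qfact q (a + m) * qfact q (a + n) / (qfact q a * qfact q (a + m + n).+2)
  = (qint q m.+1%:Z * qint q n.+1%:Z)^-1
    * (qfact q (m + k).+1 * qfact q (n + k).+1
       / (qfact q k * qfact q (m + n + k).+2)).
Proof.
have [m1 n1] := (@qint_neq0 m.+1 isT, @qint_neq0 n.+1 isT).
elim: k => [|k IHk].
  rewrite big_nat1 !add0n !addn0 qfact0 [qfact q m.+1]qfactS [qfact q n.+1]qfactS.
  by field; rewrite m1 n1 qfact_neq0.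
rewrite big_nat_recr //= IHk !addnS !addSn (addnC k m) (addnC k n) (addnAC m k n).
have recE := qint_addMaddE m.+1%:Z n.+1%:Z k.+1%:Z.
rewrite -!PoszD !addSn !addnS !addSn in recE.
rewrite [qfact q (m + k).+2]qfactS [qfact q (n + k).+2]qfactS.
rewrite [X in _ = _ * (X / _)]mulrACA recE.
rewrite [qfact q k.+1]qfactS [qfact q (m + n + k).+3]qfactS.
have [k1 mnk1] := (@qint_neq0 k.+1 isT, @qint_neq0 (m + n + k).+3 isT).
by field; rewrite m1 n1 k1 mnk1 !qfact_neq0.
Qed.

End QInt.

Lemma qvar_neq0 : qvar != 0.
Proof. by rewrite tofrac_eq0 polyX_eq0. Qed.

Lemma qvar_not_root1 n : (0 < n)%N -> qvar ^+ n != 1.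
Proof.
move=> n_gt0; rewrite /qvar -tofracXn -tofrac1 tofrac_eq.
apply: contraTneq n_gt0 => /(congr1 (fun p : {poly rat} => size p)).
by rewrite size_polyXn size_poly1 => -[->].
Qed.

Theorem lemmaA7 (b k i : nat) (hi1 : (1 <= i)%N) (hib : (i <= b - 1)%N) :
  \sum_(0 <= a < k.+1)
     (qfact qvar (a + i - 1) * qfact qvar (b - i + a - 1))
     / (qfact qvar a * qfact qvar (a + b))
  = (qint qvar i%:Z * qint qvar (b - i)%:Z)^-1
    * ((qfact qvar (i + k) * qfact qvar (b + k - i))
       / (qfact qvar k * qfact qvar (b + k))).
Proof.
case: i hi1 hib => [//|m] _ hib.
have [n ->] : exists n, b = (m + n).+2 by exists (b - m.+2)%N; lia.
have idxE a : [/\ (a + m.+1 - 1 = a + m)%N, ((m + n).+2 - m.+1 + a - 1 = a + n)%N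
                & (a + (m + n).+2 = (a + m + n).+2)%N] by split; lia.
under eq_bigr => a _ do case: (idxE a) => -> -> ->.
have -> : ((m + n).+2 - m.+1 = n.+1)%N by lia.
have -> : (m.+1 + k = (m + k).+1)%N by lia.
have -> : ((m + n).+2 + k - m.+1 = (n + k).+1)%N by lia.
have -> : ((m + n).+2 + k = (m + n + k).+2)%N by lia.
exact: sum_qfact_ratio qvar_neq0 qvar_not_root1 m n k.
Qed.
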